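(* Let $\mathcal{P}_{\mathrm{con}}$, $\mathcal{Q}_{\mathrm{con}}$ and $\mathcal{R}_{\mathrm{con}}$ denote the sets of isomorphism classes of finite connected permutation racks, finite connected quandles, and finite connected racks, respectively. The cartesian product induces a well-defined injective map $$\mathcal{P}_{\mathrm{con}}\times\mathcal{Q}_{\mathrm{con}}\longrightarrow\mathcal{R}_{\mathrm{con}},\qquad([C],[Q])\longmapsto[C\times Q].$$
   Context: A rack is a set $R$ with a binary operation $\rhd$ such that every left multiplication $\ell_a\colon b\mapsto a\rhd b$ is a bijection and $a\rhd(b\rhd c)=(a\rhd b)\rhd(a\rhd c)$ for all $a,b,c$; a quandle is a rack with $a\rhd a=a$ for all $a$. A permutation rack is a set $R$ with a permutation $\pi$ of $R$ and operation $a\rhd b=\pi(b)$ for all $a,b$. The product of racks is the cartesian product with componentwise operation. The inner automorphism group $\mathrm{Inn}(R)$ is the subgroup of the symmetric group on $R$ generated by all $\ell_a$; a rack is connected if it is non-empty and $\mathrm{Inn}(R)$ acts transitively on $R$. *)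

From mathcomp Require Import all_boot all_fingroup.
Set Implicit Arguments. Unset Strict Implicit. Unset Printing Implicit Defensive.

Record finMagma := FinMagma { fm_T :> finType; fm_op : fm_T -> fm_T -> fm_T }.

Section Racks.
Variable R : finMagma.
Local Notation op := (@fm_op R).

Definition is_rack : Prop :=
  (forall a : R, bijective (op a)) /\
  (forall a b c : R, op a (op b c) = op (op a b) (op a c)).

Definition is_quandle : Prop := is_rack /\ (forall a : R, op a a = a).

Definition is_perm_rack : Prop :=
  exists pi : R -> R, bijective pi /\ forall a b : R, op a b = pi b.

Definition lmul_set : {set {perm R}} :=
  [set s : {perm R} | [exists a : R, [forall b : R, s b == op a b]]].

Definition Inn : {set {perm R}} := <<lmul_set>>%g.

Definition connected : Prop :=
  0 < #|R| /\ [transitive Inn, on [set: R] | 'P]%g.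
End Racks.

Definition prod_magma (R S : finMagma) : finMagma :=
  @FinMagma (R * S)%type (fun x y => (fm_op x.1 y.1, fm_op x.2 y.2)).

Definition rack_iso (R S : finMagma) : Prop :=
  exists f : R -> S, bijective f /\
    forall a b : R, f (fm_op a b) = fm_op (f a) (f b).

From mathcomp Require Import all_boot all_fingroup.
Set Implicit Arguments. Unset Strict Implicit. Unset Printing Implicit Defensive.

(* In a permutation rack C the operation a |> b = pi b forgets a, so pi is
   the map c |-> c |> c, and connectedness of C says that pi acts
   transitively.  In C x Q with Q a quandle, (c, q) |> (c, q) = (pi c, q);
   this map is intrinsic to the rack, so an isomorphism
   F : C x Q ~= C' x Q' intertwines pi x id with pi' x id.  Transitivity of pi
   then makes the Q'-component of F (c, q) independent of c, and F splits into
   surjective morphisms C -> C' and Q -> Q'; applied to F^-1 this gives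
   surjections back, hence isomorphisms between finite sets.  Connectedness
   of C x Q is the same transitivity argument: a set stable under all left
   multiplications that contains (c, q) contains every (c', q), so the set of
   such q is stable under the left multiplications of Q. *)

Definition lmul_closed (R : finMagma) (S : {set R}) : Prop :=
  forall a x, x \in S -> fm_op a x \in S.

Section Connectedness.
Variable R : finMagma.

Lemma Inn_norm_closed (S : {set R}) : lmul_closed S -> Inn R \subset 'N(S | 'P)%g.
Proof.
move=> closedS; rewrite gen_subG; apply/subsetP => s.
rewrite inE => /existsP [a /forallP sE]; rewrite inE in_setT /= inE.
by apply/subsetP => x xS; rewrite inE /= apermE (eqP (sE x)); exact: closedS.
Qed.

Lemma connected_closed (connR : connected R) (S : {set R}) x y :
  lmul_closed S -> x \in S -> y \in S.
Proof.
move=> closedS xS; have [_ transR] := connR.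
have [g gInn ->] := atransP2 transR (in_setT x) (in_setT y).
by rewrite (astabs_act _ (subsetP (Inn_norm_closed closedS) g gInn)).
Qed.

Hypothesis rackR : is_rack R.

Definition lmul (a : R) : {perm R} := perm (bij_inj (rackR.1 a)).

Lemma lmulE (a x : R) : lmul a x = fm_op a x.
Proof. exact: permE. Qed.

Lemma lmul_Inn (a : R) : lmul a \in Inn R.
Proof.
by rewrite mem_gen // inE; apply/existsP; exists a; apply/forallP => b; rewrite lmulE.
Qed.

Lemma orbit_Inn_closed (x : R) : lmul_closed (orbit 'P (Inn R) x).
Proof.
move=> a y /orbitP [g gInn <-]; apply/orbitP; exists (g * lmul a)%g.
  by rewrite groupM ?lmul_Inn.
by rewrite actM /= apermE lmulE.
Qed.

Lemma connected_of_closed :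
  0 < #|R| -> (forall (S : {set R}) x y, lmul_closed S -> x \in S -> y \in S) ->
  connected R.
Proof.
move=> R_gt0 closedP; split=> //; have [x _] := card_gt0P R_gt0.
apply/imsetP; exists x => //; apply/setP => y.
by rewrite in_setT (closedP _ x y (@orbit_Inn_closed x) (orbit_refl 'P _ x)).
Qed.

End Connectedness.

Section PermutationRack.
Variable C : finMagma.
Hypothesis permC : is_perm_rack C.

Lemma perm_rack_opE (a b : C) : fm_op a b = fm_op b b.
Proof. by case: permC => pi [_ opE]; rewrite !opE. Qed.

Lemma perm_rack_rack : is_rack C.
Proof.
case: permC => pi [[pi' piK pi'K] opE]; split=> [a|a b c]; last by rewrite !opE.
by exists pi' => x; rewrite opE ?piK ?pi'K.
Qed.

Lemma perm_rack_connected_closed (connC : connected C) (S : {set C}) x y :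
  (forall z, z \in S -> fm_op z z \in S) -> x \in S -> y \in S.
Proof.
move=> closedS; apply: connected_closed => // a z.
by rewrite perm_rack_opE; exact: closedS.
Qed.

End PermutationRack.

Lemma prod_rack (R S : finMagma) : is_rack R -> is_rack S -> is_rack (prod_magma R S).
Proof.
move=> [bijR distR] [bijS distS]; split=> [[a1 a2]|[a1 a2] [b1 b2] [c1 c2] /=].
  have [g1 K1 K1'] := bijR a1; have [g2 K2 K2'] := bijS a2.
  by exists (fun y : R * S => (g1 y.1, g2 y.2)) => -[x1 x2] /=; rewrite ?K1 ?K2 ?K1' ?K2'.
by rewrite distR distS.
Qed.

Lemma prod_perm_quandle_connected (C Q : finMagma) :
  is_perm_rack C -> connected C -> is_quandle Q -> connected Q ->
  connected (prod_magma C Q).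
Proof.
move=> permC connC [rackQ idemQ] connQ.
apply: connected_of_closed => [||S [c q] [c' q'] closedS cqS].
    exact: prod_rack (perm_rack_rack permC) rackQ.
  by rewrite card_prod muln_gt0 (proj1 connC) (proj1 connQ).
have fibre_full c0 r : (c0, r) \in S -> forall d, (d, r) \in S.
  move=> c0rS d; suff : d \in [set d | (d, r) \in S] by rewrite inE.
  apply: (perm_rack_connected_closed permC connC (x := c0)); rewrite ?inE //.
  by move=> z; rewrite !inE => /(closedS (z, r)) /=; rewrite idemQ.
suff : q' \in [set r | (c, r) \in S] by rewrite inE => /fibre_full.
apply: (connected_closed connQ (x := q)); rewrite ?inE //.
by move=> a r; rewrite !inE => /(closedS (c, a)) /= /fibre_full; apply.
Qed.

Lemma rack_iso_sym (R S : finMagma) : rack_iso R S -> rack_iso S R.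
Proof.
move=> [f [[g fK gK] fM]]; exists g; split; first by exists f.
by move=> a b; rewrite -{1}(gK a) -{1}(gK b) -fM fK.
Qed.

Lemma rack_iso_prod (R R' S S' : finMagma) :
  rack_iso R R' -> rack_iso S S' -> rack_iso (prod_magma R S) (prod_magma R' S').
Proof.
move=> [f [[f' fK f'K] fM]] [g [[g' gK g'K] gM]].
exists (fun x : R * S => (f x.1, g x.2)); split.
  by exists (fun y : R' * S' => (f' y.1, g' y.2)) => -[x1 x2] /=; rewrite ?fK ?gK ?f'K ?g'K.
by move=> [a1 a2] [b1 b2] /=; rewrite fM gM.
Qed.

Lemma surj_card_codom (T T' : finType) (f : T -> T') :
  (forall y, exists x, f x = y) -> #|codom f| = #|T'|.
Proof.
move=> surjf; apply/eqP; rewrite eqn_leq max_card /=.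
by apply/subset_leq_card/subsetP => y _; have [x <-] := surjf y; exact: codom_f.
Qed.

Lemma surj_surj_bij (T T' : finType) (f : T -> T') (g : T' -> T) :
  (forall y, exists x, f x = y) -> (forall x, exists y, g y = x) -> bijective f.
Proof.
move=> surjf surjg.
have leTT' : #|T| <= #|T'| by rewrite -(surj_card_codom surjg) leq_image_card.
have leT'T : #|T'| <= #|T| by rewrite -(surj_card_codom surjf) leq_image_card.
have injf : injective f.
  move=> x1 x2; apply: (image_injP (A := T) _) => //.
  by rewrite (surj_card_codom surjf) eqn_leq leTT' leT'T.
exact: inj_card_bij injf leT'T.
Qed.

Section ProductIsomorphism.
Variables C Q C' Q' : finMagma.
Hypotheses (permC : is_perm_rack C) (connC : connected C).
Hypotheses (permC' : is_perm_rack C') (connC' : connected C').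
Hypotheses (idemQ : forall q : Q, fm_op q q = q) (idemQ' : forall q : Q', fm_op q q = q).
Variable F : prod_magma C Q -> prod_magma C' Q'.
Hypothesis FM : {morph F : x y / fm_op x y >-> fm_op x y}.
Hypothesis F_bij : bijective F.

Lemma prod_iso_diag (c : C) (q : Q) :
  F (fm_op c c, q) = (fm_op (F (c, q)).1 (F (c, q)).1, (F (c, q)).2).
Proof.
have := FM (c, q) (c, q); rewrite /= idemQ => ->.
by case: (F (c, q)) => y1 y2 /=; rewrite idemQ'.
Qed.

Lemma prod_iso_snd_const (c c0 : C) (q : Q) : (F (c, q)).2 = (F (c0, q)).2.
Proof.
suff : c \in [set d | (F (d, q)).2 == (F (c0, q)).2] by rewrite inE => /eqP.
apply: (perm_rack_connected_closed permC connC (x := c0)); rewrite ?inE //.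
by move=> d; rewrite !inE prod_iso_diag.
Qed.

Lemma prod_iso_fst_morph (q0 : Q) :
  {morph (fun c => (F (c, q0)).1) : a b / fm_op a b >-> fm_op a b}.
Proof.
by move=> a b /=; rewrite perm_rack_opE // prod_iso_diag (perm_rack_opE permC').
Qed.

Lemma prod_iso_fst_surj (q0 : Q) y : exists c, (F (c, q0)).1 = y.
Proof.
have [c0 _] := card_gt0P (proj1 connC).
suff : y \in [set y | [exists c, (F (c, q0)).1 == y]].
  by rewrite inE => /existsP [c /eqP]; exists c.
apply: (perm_rack_connected_closed permC' connC' (x := (F (c0, q0)).1)).
  move=> z; rewrite !inE => /existsP [c /eqP <-]; apply/existsP; exists (fm_op c c).
  by rewrite prod_iso_diag.
by rewrite inE; apply/existsP; exists c0.
Qed.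

Lemma prod_iso_snd_morph (c0 : C) :
  {morph (fun q => (F (c0, q)).2) : a b / fm_op a b >-> fm_op a b}.
Proof.
move=> a b /=; have /= FE := FM (c0, a) (c0, b).
by rewrite (prod_iso_snd_const c0 (fm_op c0 c0)) FE.
Qed.

Lemma prod_iso_snd_surj (c0 : C) y : exists q, (F (c0, q)).2 = y.
Proof.
have [G _ GK] := F_bij; have [x' _] := card_gt0P (proj1 connC').
case Gx'y: (G (x', y)) => [c q]; exists q.
by rewrite -(prod_iso_snd_const c) -Gx'y GK.
Qed.

End ProductIsomorphism.

Theorem theorem7p11 :
  forall (C Q : finMagma),
    is_perm_rack C -> connected C -> is_quandle Q -> connected Q ->
    (* the product lands in finite connected racks *)
    (is_rack (prod_magma C Q) /\ connected (prod_magma C Q)) /\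
    forall (C' Q' : finMagma),
      is_perm_rack C' -> connected C' -> is_quandle Q' -> connected Q' ->
      (* well-defined on isomorphism classes *)
      (rack_iso C C' -> rack_iso Q Q' ->
         rack_iso (prod_magma C Q) (prod_magma C' Q')) /\
      (* injective *)
      (rack_iso (prod_magma C Q) (prod_magma C' Q') ->
         rack_iso C C' /\ rack_iso Q Q').
Proof.
move=> C Q permC connC quandleQ connQ; split.
  split; last exact: prod_perm_quandle_connected.
  by apply: prod_rack; [exact: perm_rack_rack | case: quandleQ].
move=> C' Q' permC' connC' quandleQ' connQ'; split; first exact: rack_iso_prod.
move=> isoF; have [F [F_bij FM]] := isoF; have [G [G_bij GM]] := rack_iso_sym isoF.
have [c0 _] := card_gt0P (proj1 connC); have [q0 _] := card_gt0P (proj1 connQ).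
have [c0' _] := card_gt0P (proj1 connC'); have [q0' _] := card_gt0P (proj1 connQ').
have [[_ idemQ] [_ idemQ']] := (quandleQ, quandleQ').
split.
  exists (fun c => (F (c, q0)).1); split; last exact: prod_iso_fst_morph.
  apply: (surj_surj_bij (g := fun c' => (G (c', q0')).1)) => y.
    exact: prod_iso_fst_surj.
  exact: prod_iso_fst_surj.
exists (fun q => (F (c0, q)).2); split; last exact: prod_iso_snd_morph.
apply: (surj_surj_bij (g := fun q' => (G (c0', q')).2)) => y.
  exact: prod_iso_snd_surj.
exact: prod_iso_snd_surj.
Qed.
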